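(* For every semi-perfect graph $G$, $$\mu_\alpha(G)=\min\{k\ge 1 : G \text{ has a } k\text{-tight clique partition}\}-1.$$
   Context: All graphs are finite, simple and undirected. For a graph $G$, $\alpha(G)$ is the maximum size of an independent set and $i(G)$ is the minimum size of a maximal (with respect to inclusion) independent set; the independence gap is $\mu_\alpha(G)=\alpha(G)-i(G)$. $\theta(G)$ denotes the minimum number of cliques whose union is $V(G)$. A graph $G$ is semi-perfect if $\alpha(G)=\theta(G)$. A clique partition of $G$ is a set of pairwise disjoint cliques whose union is $V(G)$. For a positive integer $k$, a clique partition of $G$ is $k$-tight if for every $k$ cliques of the partition, their union intersects every maximal independent set of $G$. *)

(* A finite simple graph is a finType T of vertices with an
   irreflexive symmetric adjacency relation e : rel T. *)
From mathcomp Require Import all_boot.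
Set Implicit Arguments. Unset Strict Implicit. Unset Printing Implicit Defensive.

Section Graph.
Variables (T : finType) (e : rel T).

Definition independent (S : {set T}) : bool :=
  [forall x in S, forall y in S, (x != y) ==> ~~ e x y].

Definition clique (C : {set T}) : bool :=
  [forall x in C, forall y in C, (x != y) ==> e x y].

Definition maximal_independent (S : {set T}) : bool :=
  independent S && [forall x, (x \notin S) ==> ~~ independent (x |: S)].

Definition alpha : nat := \max_(S : {set T} | independent S) #|S|.

(* i(G): minimum size of a maximal independent set (one always exists;
   #|T| is only the neutral element of the minimum) *)
Definition indep_dom : nat :=
  \big[minn/#|T|]_(S : {set T} | maximal_independent S) #|S|.

Definition mu_alpha : nat := alpha - indep_dom.

(* theta(G): minimum number of cliques whose union is V(G)
   (a covering by cliques always exists, e.g. by singletons) *)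
Definition theta : nat :=
  \big[minn/#|T|]_(P : {set {set T}} |
       [forall C in P, clique C] && (cover P == [set: T])) #|P|.

Definition semi_perfect : Prop := alpha = theta.

Definition clique_partition (P : {set {set T}}) : bool :=
  partition P [set: T] && [forall C in P, clique C].

Definition tight (k : nat) (P : {set {set T}}) : Prop :=
  forall Q : {set {set T}}, Q \subset P -> #|Q| = k ->
  forall S : {set T}, maximal_independent S ->
  (cover Q) :&: S != set0.

Definition has_tight_clique_partition (k : nat) : Prop :=
  exists P : {set {set T}}, clique_partition P /\ tight k P.

End Graph.

From mathcomp Require Import all_boot.

Set Implicit Arguments. Unset Strict Implicit. Unset Printing Implicit Defensive.

(* An independent set S meets each clique in at most one vertex, so against a
   clique partition P it meets exactly #|S| cliques and misses #|P| - #|S| of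
   them.  A set of k cliques avoiding S exists iff k is at most that number, so
   P is k-tight iff #|P| - i(G) < k.  Every clique partition has at least
   alpha(G) cliques, and for a semi-perfect graph a partition with
   theta(G) = alpha(G) cliques exists: the least admissible k is
   alpha(G) - i(G) + 1. *)

Lemma geq_bigmin_cond (I : finType) (P : pred I) (F : I -> nat) d i :
  P i -> \big[minn/d]_(j | P j) F j <= F i.
Proof.
move=> Pi; have : i \in index_enum I by rewrite mem_index_enum.
elim: (index_enum I) => // j r IHr; rewrite inE big_cons.
case/predU1P=> [<-|/IHr]; first by rewrite Pi geq_minl.
by case: ifP => // _ le_F; rewrite geq_min le_F orbT.
Qed.

Lemma bigmin_attained (I : finType) (P : pred I) (F : I -> nat) d i0 :
  P i0 -> F i0 <= d -> exists2 i, P i & \big[minn/d]_(i | P i) F i = F i.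
Proof.
move=> Pi0 Fi0d; case: (arg_minnP F Pi0) => i Pi minFi; exists i => //.
apply/eqP; rewrite eqn_leq (geq_bigmin_cond F d Pi) /=.
apply: (big_ind (fun m => F i <= m)) => [|m n|j /minFi //].
  exact: leq_trans (minFi _ Pi0) Fi0d.
by rewrite leq_min => -> ->.
Qed.

Lemma subset_of_card (U : finType) (A : {set U}) k : k <= #|A| ->
  exists2 B : {set U}, B \subset A & #|B| = k.
Proof.
move=> kA; exists [set x in take k (enum A)].
  by apply/subsetP=> x; rewrite inE => /mem_take; rewrite mem_enum.
by rewrite cardsE (card_uniqP _) ?take_uniq ?enum_uniq // size_takel -?cardE.
Qed.

Section Graph.
Variables (T : finType) (e : rel T).
Implicit Types (S C D : {set T}) (P Q : {set {set T}}).

Lemma clique_independent_eq C S x y : clique e C -> independent e S ->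
  x \in C -> y \in C -> x \in S -> y \in S -> x = y.
Proof.
move=> /forall_inP cC /forall_inP iS xC yC xS yS.
apply/eqP; apply: contraT => nxy.
have := implyP (forall_inP (cC x xC) y yC) nxy.
by rewrite (negbTE (implyP (forall_inP (iS x xS) y yS) nxy)).
Qed.

Lemma sub_clique C D : C \subset D -> clique e D -> clique e C.
Proof.
move=> /subsetP sCD /forall_inP cD; apply/forall_inP=> x xC.
by apply/forall_inP=> y yC; apply: (forall_inP (cD x (sCD _ xC)) y (sCD _ yC)).
Qed.

Lemma alpha_attained : exists2 S : {set T}, independent e S & #|S| = alpha e.
Proof.
have indep0 : independent e set0 by apply/forall_inP=> x; rewrite inE.
exists [arg max_(S > set0 | independent e S) #|S|]; first by case: arg_maxnP.
by rewrite /alpha (bigmax_eq_arg set0).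
Qed.

Lemma maximum_independent_maximal S :
  independent e S -> #|S| = alpha e -> maximal_independent e S.
Proof.
move=> iS cS; rewrite /maximal_independent iS /=.
apply/forall_inP=> x xS; apply/negP=> ix.
have := @leq_bigmax_cond _ (independent e) (fun S : {set T} => #|S|) _ ix.
by rewrite -/(alpha e) -cS cardsU1 xS ltnn.
Qed.

Lemma indep_dom_attained :
  exists2 S : {set T}, maximal_independent e S & #|S| = indep_dom e.
Proof.
have [S0 iS0 /(maximum_independent_maximal iS0) mS0] := alpha_attained.
rewrite /indep_dom.
have [S mS ->] := @bigmin_attained _ _ (fun S : {set T} => #|S|) #|T| _ mS0
  (max_card _).
by exists S.
Qed.

Lemma indep_dom_le S : maximal_independent e S -> indep_dom e <= #|S|.
Proof. exact: geq_bigmin_cond. Qed.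

Definition clique_cover P :=
  [forall C in P, clique e C] && (cover P == [set: T]).

Lemma theta_attained : exists2 P : {set {set T}},
  clique_cover P & #|P| = theta e.
Proof.
pose P1 := [set [set x] | x : T].
have cover1 : clique_cover P1.
  apply/andP; split.
    apply/forall_inP=> C /imsetP[x _ ->]; apply/forall_inP=> y /set1P ->.
    by apply/forall_inP=> z /set1P ->; rewrite eqxx.
  apply/eqP/setP=> x; rewrite inE; apply/bigcupP.
  by exists [set x]; rewrite ?imset_f ?set11.
rewrite /theta.
have [P coverP ->] := @bigmin_attained _ clique_cover (fun P => #|P|)
  #|T| _ cover1 (leq_imset_card _ _).
by exists P.
Qed.

Lemma clique_partition_of_cover Pc :
  clique_cover Pc ->
  exists2 P : {set {set T}}, clique_partition e P & #|P| <= #|Pc|.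
Proof.
case/andP=> /forall_inP cl /eqP cv.
pose f x := odflt set0 [pick C in Pc | x \in C].
have fP x : f x \in Pc /\ x \in f x.
  have : x \in cover Pc by rewrite cv inE.
  case/bigcupP=> C CP xC; rewrite /f; case: pickP => [D /andP[] //|/(_ C)].
  by rewrite CP xC.
exists (preim_partition f [set: T]).
  rewrite /clique_partition preim_partitionP /=.
  apply/forall_inP=> B /imsetP[x _ ->]; apply: (@sub_clique _ (f x)).
    by apply/subsetP=> y; rewrite inE => /andP[_ /eqP ->]; case: (fP y).
  by apply: cl; case: (fP x).
have -> : preim_partition f [set: T] =
    (fun C => [set y in [set: T] | C == f y]) @: (f @: [set: T]).
  by rewrite -imset_comp.
apply: (leq_trans (leq_imset_card _ _)); apply: subset_leq_card.
by apply/subsetP=> C /imsetP[x _ ->]; case: (fP x).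
Qed.

Lemma theta_clique_partition :
  exists2 P : {set {set T}}, clique_partition e P & #|P| <= theta e.
Proof.
have [Pc /clique_partition_of_cover [P cpP szP] <-] := theta_attained.
by exists P.
Qed.

Definition missed_cliques P S := [set C in P | [disjoint C & S]].

Lemma card_met_cliques P S : clique_partition e P -> independent e S ->
  #|[set C in P | ~~ [disjoint C & S]]| = #|S|.
Proof.
case/andP=> /and3P[/eqP coverP trivP _] /forall_inP cl iS.
have cov x : x \in cover P by rewrite coverP inE.
have -> : [set C in P | ~~ [disjoint C & S]] = pblock P @: S.
  apply/setP=> C; rewrite inE -setI_eq0; apply/andP/imsetP.
  - case=> CP /set0Pn[y /setIP[yC yS]]; exists y => //.
    by rewrite (def_pblock trivP CP yC).
  - case=> x xS ->; split; first exact: pblock_mem.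
    by apply/set0Pn; exists x; rewrite inE mem_pblock cov.
apply: card_in_imset => x y xS yS eq_xy.
have yx : y \in pblock P x by rewrite eq_xy mem_pblock cov.
by apply: (clique_independent_eq (cl _ (pblock_mem (cov x))) iS);
  rewrite ?mem_pblock ?cov.
Qed.

Lemma card_missed_cliques P S : clique_partition e P -> independent e S ->
  #|missed_cliques P S| = #|P| - #|S|.
Proof.
move=> cpP iS; rewrite -(card_met_cliques cpP iS).
set D := [set C : {set T} | [disjoint C & S]].
have -> : [set C in P | ~~ [disjoint C & S]] = P :\: D.
  by apply/setP=> C; rewrite !inE andbC.
have -> : missed_cliques P S = P :&: D by apply/setP=> C; rewrite !inE.
by rewrite -(cardsID D P) addnK.
Qed.

Lemma independent_le_clique_partition P S :
  clique_partition e P -> independent e S -> #|S| <= #|P|.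
Proof.
move=> cpP iS; rewrite -(card_met_cliques cpP iS); apply: subset_leq_card.
by apply/subsetP=> C; rewrite inE => /andP[].
Qed.

Lemma alpha_le_clique_partition P : clique_partition e P -> alpha e <= #|P|.
Proof.
move=> cpP; have [S iS <-] := alpha_attained.
exact: independent_le_clique_partition cpP iS.
Qed.

Lemma cover_disjoint_missed P Q S : Q \subset P ->
  (cover Q :&: S == set0) = (Q \subset missed_cliques P S).
Proof.
move=> /subsetP QP; rewrite setI_eq0 disjoint_sym.
apply/bigcup_disjointP/subsetP=> [disj C CQ | sub C CQ].
  by rewrite inE QP //= disjoint_sym disj.
by move: (sub C CQ); rewrite inE disjoint_sym => /andP[].
Qed.

Lemma tightP k P : tight e k P <->
  (forall S, maximal_independent e S -> #|missed_cliques P S| < k).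
Proof.
have missedP S : missed_cliques P S \subset P.
  by apply/subsetP=> C; rewrite inE => /andP[].
split=> [tk S mS | small Q QP cardQ S mS].
  rewrite ltnNge; apply/negP => /subset_of_card[Q QM cardQ].
  have := tk Q (subset_trans QM (missedP S)) cardQ S mS.
  by rewrite (cover_disjoint_missed _ (subset_trans QM (missedP S))) QM.
rewrite (cover_disjoint_missed _ QP); apply/negP => /subset_leq_card.
by rewrite cardQ leqNgt small.
Qed.

Lemma tight_clique_partitionP k P : clique_partition e P ->
  tight e k P <-> #|P| - indep_dom e < k.
Proof.
move=> cpP; apply: (iff_trans (tightP k P)).
have [Sm mSm cardSm] := indep_dom_attained.
have iS S : maximal_independent e S -> independent e S by case/andP.
split=> [small | lt_k S mS].
  by rewrite -cardSm -(card_missed_cliques cpP (iS _ mSm)) small.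
rewrite (card_missed_cliques cpP (iS _ mS)).
exact: leq_ltn_trans (leq_sub2l _ (indep_dom_le mS)) lt_k.
Qed.

End Graph.

Theorem mainTheorem5 (T : finType) (e : rel T)
  (e_irr : irreflexive e) (e_sym : symmetric e) :
  semi_perfect e ->
  has_tight_clique_partition e (mu_alpha e).+1 /\
  (forall k : nat, 1 <= k -> has_tight_clique_partition e k -> (mu_alpha e).+1 <= k).
Proof.
move=> alpha_theta; split.
  have [P cpP cardP] := theta_clique_partition e.
  exists P; split=> //; apply/(tight_clique_partitionP _ cpP).
  by rewrite ltnS leq_sub2r // alpha_theta.
move=> k _ [P [cpP /(tight_clique_partitionP _ cpP) lt_k]].
exact: leq_ltn_trans (leq_sub2r _ (alpha_le_clique_partition cpP)) lt_k.
Qed.
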